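(* Let $\epsilon\in(0,1/e]$, $p_v,p_e\in(0,1]$, let $G=(V,E)$ be a graph with nonnegative edge weights $w_e$, and let $\tilde x$ be the values set in step 1 of the non-crucial edge procedure (context). Then $$\mathbb{E}\Big[\sum_{e\in\mathcal{E}_Q\cap N}w_e\,\tilde x_e\Big]\ \ge\ (1-\epsilon)\,\varphi(N),$$ where the expectation is over the randomness of Algorithm 1 and the realization $\mathcal{G}$.
   Context: Realization model: given $p_v,p_e\in(0,1]$ and $G=(V,E)$ with weights $w_e\ge0$, a realization $\mathcal{G}=(\mathcal{V},\mathcal{E})$ keeps each vertex independently with probability $p_v$ and each edge $(u,v)$ independently with probability $p_e$ provided both $u,v$ are kept. Fix a deterministic algorithm computing a maximum-weight matching $M(H)$. $q_e:=\Pr[e\in M(\mathcal{G})]$. For $X\subseteq E$, $\varphi(X):=\sum_{e\in X}w_eq_e$. $\tau=\frac{\epsilon^3p_v^2p_e}{20\log(1/\epsilon)}$, $R=\frac{2000\log(1/\epsilon)\log(1/(\epsilon p_v^2p_e))}{\epsilon^4p_v^2p_e}$. $N=\{e\in E:q_e<\tau\}$. Algorithm 1: for $r=1,\dots,R$ draw an independent realization $\mathcal{G}_r$ and put the edges of $M(\mathcal{G}_r)$ into $Q=(V,E_Q)$; $f_e:=$ (number of $r$ with $e\in M(\mathcal{G}_r)$)$/R$. The realization $\mathcal{G}$ is independent of the algorithm's samples; $\mathcal{E}_Q=E_Q\cap\mathcal{E}$. Step 1 of the non-crucial edge procedure: for $e\in\mathcal{E}_Q\cap N$, $\tilde x_e=\min\{f_e/(p_v^2p_e),\,2\tau/(p_v^2p_e)\}$;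 $\tilde x_e=0$ otherwise. *)

From HB Require Import structures.
From mathcomp Require Import all_boot all_order all_algebra.
From mathcomp Require Import reals sequences exp.
Set Implicit Arguments. Unset Strict Implicit. Unset Printing Implicit Defensive.
Import Order.TTheory GRing.Theory Num.Theory.
Local Open Scope ring_scope.

(* A graph G = (V,E): V a finite type, E a set of 2-element subsets of V.
   A realization is a pair (vertex set, edge set). *)
Section Model.
Variables (R : realType) (V : finType).

Definition edge := {set V}.
Definition realization := ({set V} * {set edge})%type.

Definition induced_edges (E : {set edge}) (S : {set V}) : {set edge} :=
  [set e in E | e \subset S].

Definition real_prob (pv pe : R) (E : {set edge}) (g : realization) : R :=
  let S := g.1 in let F := g.2 in
  if F \subset induced_edges E S then
    pv ^+ #|S| * (1 - pv) ^+ (#|V| - #|S|)%N *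
    pe ^+ #|F| * (1 - pe) ^+ (#|induced_edges E S| - #|F|)%N
  else 0.

Definition is_matching (F : {set edge}) : Prop :=
  forall e1 e2, e1 \in F -> e2 \in F -> e1 != e2 -> [disjoint e1 & e2].

Definition set_weight (w : edge -> R) (F : {set edge}) : R := \sum_(e in F) w e.

Definition max_weight_matching_alg (E : {set edge}) (w : edge -> R)
    (M : realization -> {set edge}) : Prop :=
  forall g : realization, g.2 \subset induced_edges E g.1 ->
    [/\ M g \subset g.2, is_matching (M g) &
        forall F' : {set edge}, F' \subset g.2 -> is_matching F' ->
          set_weight w F' <= set_weight w (M g)].

Definition q_edge (pv pe : R) (E : {set edge}) (M : realization -> {set edge})
    (e : edge) : R :=
  \sum_(g : realization) real_prob pv pe E g * (e \in M g)%:R.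

Definition tau (eps pv pe : R) : R :=
  eps ^+ 3 * pv ^+ 2 * pe / (20 * ln (1 / eps)).

Definition Rreal (eps pv pe : R) : R :=
  2000 * ln (1 / eps) * ln (1 / (eps * pv ^+ 2 * pe)) /
  (eps ^+ 4 * pv ^+ 2 * pe).

Definition rounds (eps pv pe : R) : nat := `|Num.ceil (Rreal eps pv pe)|%N.

Definition Nset (eps pv pe : R) (E : {set edge}) (M : realization -> {set edge})
  : {set edge} := [set e in E | q_edge pv pe E M e < tau eps pv pe].

Definition f_edge (n : nat) (M : realization -> {set edge})
    (samples : {ffun 'I_n -> realization}) (e : edge) : R :=
  #|[set r : 'I_n | e \in M (samples r)]|%:R / n%:R.

Definition EQ (n : nat) (M : realization -> {set edge})
    (samples : {ffun 'I_n -> realization}) : {set edge} :=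
  \bigcup_(r : 'I_n) M (samples r).

Definition xtilde (eps pv pe : R) (E : {set edge}) (M : realization -> {set edge})
    (samples : {ffun 'I_(rounds eps pv pe) -> realization}) (g : realization)
    (e : edge) : R :=
  if e \in (EQ M samples :&: g.2) :&: Nset eps pv pe E M then
    Num.min (f_edge M samples e / (pv ^+ 2 * pe))
            (2 * tau eps pv pe / (pv ^+ 2 * pe))
  else 0.
Arguments xtilde : clear implicits.
Arguments xtilde eps pv pe E M samples g e.

Definition expected_value (eps pv pe : R) (E : {set edge}) (w : edge -> R)
    (M : realization -> {set edge}) : R :=
  \sum_(samples : {ffun 'I_(rounds eps pv pe) -> realization})
  \sum_(g : realization)
    (\prod_(r : 'I_(rounds eps pv pe)) real_prob pv pe E (samples r)) *
    real_prob pv pe E g *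
    \sum_(e in (EQ M samples :&: g.2) :&: Nset eps pv pe E M)
       w e * xtilde eps pv pe E M samples g e.

Definition phi (pv pe : R) (E : {set edge}) (w : edge -> R)
    (M : realization -> {set edge}) (X : {set edge}) : R :=
  \sum_(e in X) w e * q_edge pv pe E M e.

End Model.

(* Everything factors edge by edge.  For e in N, the realization keeps e with
   probability p_v^2 p_e independently of the samples of Algorithm 1, so the
   contribution of e is w_e E[min(f_e, 2 tau)].  The frequency f_e is an
   average of R independent Bernoulli(q_e) variables, hence has mean q_e and
   variance at most q_e / R.  Since q_e < tau, the pointwise bound
   min(f, 2 tau) >= f - (f - q_e)^2 / tau gives
   E[min(f_e, 2 tau)] >= q_e - q_e / (R tau) >= (1 - eps) q_e,
   the last step because eps R tau >= 100 ln(1/(eps p_v^2 p_e)) >= 1. *)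
From HB Require Import structures.
From mathcomp Require Import all_boot all_order all_algebra.
From mathcomp Require Import reals sequences exp.
From mathcomp Require Import ring lra.
Import Order.TTheory GRing.Theory Num.Theory.
Local Open Scope ring_scope.
Set Implicit Arguments. Unset Strict Implicit. Unset Printing Implicit Defensive.

Section ProductSums.
Variable R : realType.

Lemma prod_pred1 (T : finType) (a : T) (F : T -> R) :
  \prod_(x : T) (if x == a then F x else 1) = F a.
Proof. by rewrite -big_mkcond big_pred1_eq. Qed.

Lemma sum_subsets_prod (T : finType) (F : T -> bool -> R) :
  \sum_(A : {set T}) \prod_(x : T) F x (x \in A) =
  \prod_(x : T) (F x true + F x false).
Proof.
under [RHS]eq_bigr => x _ do rewrite -big_bool.
rewrite bigA_distr_bigA (reindex (fun A : {set T} => [ffun x => x \in A])) /=.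
  by apply: eq_bigr => A _; apply: eq_bigr => x _; rewrite ffunE.
exists (fun f : {ffun T -> bool} => [set x | f x]) => [A _|f _].
  by apply/setP => x; rewrite inE ffunE.
by apply/ffunP => x; rewrite ffunE inE.
Qed.

Lemma prod_mem_card (T : finType) (A : {set T}) (a b : R) :
  \prod_(x : T) (if x \in A then a else b) = a ^+ #|A| * b ^+ (#|T| - #|A|).
Proof.
rewrite (_ : \prod_(x : T) _ = \prod_(x in [set: T]) (if x \in A then a else b));
  last by apply: eq_bigl => x; rewrite inE.
rewrite (big_setID A) /= setTI setTD (eq_bigr (fun _ => a)) => [|x ->] //.
rewrite [X in _ * X](eq_bigr (fun _ => b)) => [|x]; last by rewrite inE => /negbTE ->.
by rewrite !prodr_const [#|~: A|]cardsCs setCK.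
Qed.

Lemma prod_sub_mem_card (T : finType) (I F : {set T}) (a b : R) :
  \prod_(x : T) (if x \in I then (if x \in F then a else b)
                 else (if x \in F then 0 else 1)) =
  if F \subset I then a ^+ #|F| * b ^+ (#|I| - #|F|) else 0.
Proof.
case: ifP => [sFI|/negbT/subsetPn[x xF xI]]; last first.
  by rewrite (bigD1 x) //= (negbTE xI) xF mul0r.
rewrite (bigID (mem I)) /= [X in _ * X]big1 ?mulr1; last first.
  by move=> x /negbTE xI; rewrite xI; case: ifP => // /(subsetP sFI); rewrite xI.
rewrite (big_setID F) /= (eq_bigr (fun _ => a)); last first.
  by move=> x; rewrite inE => /andP[-> ->].
rewrite [X in _ * X](eq_bigr (fun _ => b)); last first.
  by move=> x; rewrite inE => /andP[/negbTE -> ->].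
by rewrite !prodr_const cardsD (setIidPr sFI).
Qed.

End ProductSums.

Section RealizationProbability.
Variables (R : realType) (V : finType) (E : {set {set V}}) (pv pe : R).

Definition bernoulli (p : R) (b : bool) : R := if b then p else 1 - p.

Definition edge_law (I : {set {set V}}) (y : {set V}) (b : bool) : R :=
  if y \in I then bernoulli pe b else (~~ b)%:R.

Lemma bernoulliD p : bernoulli p true + bernoulli p false = 1.
Proof. by rewrite /bernoulli addrC subrK. Qed.

Lemma edge_lawD I y : edge_law I y true + edge_law I y false = 1.
Proof. by rewrite /edge_law; case: ifP => _; rewrite ?bernoulliD ?add0r. Qed.

Lemma real_prob_prod (S : {set V}) (F : {set {set V}}) :
  real_prob pv pe E (S, F) =
  (\prod_(x : V) bernoulli pv (x \in S)) *
  \prod_(y : {set V}) edge_law (induced_edges E S) y (y \in F).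
Proof.
rewrite (eq_bigr (fun x => if x \in S then pv else 1 - pv)); last first.
  by move=> x _; case: (x \in S).
rewrite prod_mem_card (eq_bigr (fun y =>
  if y \in induced_edges E S then (if y \in F then pe else 1 - pe)
  else (if y \in F then 0 else 1))); last first.
  by move=> y _; rewrite /edge_law /bernoulli; case: (y \in F).
rewrite prod_sub_mem_card /real_prob /=.
by case: ifP; rewrite ?mulr0 // !mulrA.
Qed.

Lemma sum_realization (F : realization V -> R) :
  \sum_(g : realization V) F g =
  \sum_(S : {set V}) \sum_(A : {set {set V}}) F (S, A).
Proof. by rewrite pair_bigA; apply: eq_bigr => -[]. Qed.

Lemma sum_real_prob : \sum_(g : realization V) real_prob pv pe E g = 1.
Proof.
rewrite sum_realization.
under eq_bigr => S _.
  under eq_bigr => F _ do rewrite real_prob_prod.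
  rewrite -mulr_sumr sum_subsets_prod.
  under [X in _ * X]eq_bigr => y _ do rewrite edge_lawD.
  rewrite prodr_const expr1n mulr1.
over.
rewrite (sum_subsets_prod (fun _ => bernoulli pv)).
by under eq_bigr => x _ do rewrite bernoulliD; rewrite prodr_const expr1n.
Qed.

Lemma prod_mem_subset (e S : {set V}) :
  \prod_(x : V) (if x \in e then (x \in S)%:R else 1) = (e \subset S)%:R :> R.
Proof.
case: (boolP (e \subset S)) => [sES|/subsetPn[x xe xS]]; last first.
  by rewrite (bigD1 x) //= xe (negbTE xS) mul0r.
by apply: big1 => x _; case: ifP => // /(subsetP sES) ->.
Qed.

(* Write [e \in F] as a product over all candidate edges, so that the sum over
   F factors like the total mass; likewise [e \subset S] over vertices. *)
Lemma prob_edge_realized (e : {set V}) : e \in E -> #|e| = 2%N ->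
  \sum_(g : realization V) real_prob pv pe E g * (e \in g.2)%:R = pv ^+ 2 * pe.
Proof.
move=> eE e2; rewrite sum_realization.
transitivity (\sum_(S : {set V}) \prod_(x : V) (bernoulli pv (x \in S) *
    (if x \in e then (x \in S)%:R else 1)) * pe).
  apply: eq_bigr => S _.
  rewrite (eq_bigr _ (fun F _ => congr1 (fun z => z * _) (real_prob_prod S F))).
  under eq_bigr => F _ do rewrite /= -mulrA
    -[(e \in F)%:R](prod_pred1 e (fun y => (y \in F)%:R)) -big_split /=.
  rewrite -mulr_sumr (sum_subsets_prod (fun y b =>
    edge_law (induced_edges E S) y b * (if y == e then b%:R else 1))).
  rewrite (eq_bigr (fun y => if y == e then edge_law (induced_edges E S) y true
                             else 1)); last first.
    by move=> y _; case: eqP => _; rewrite ?mulr1 ?mulr0 ?addr0 ?edge_lawD.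
  rewrite prod_pred1 big_split /= prod_mem_subset /edge_law /bernoulli inE eE.
  by case: (e \subset S); rewrite ?mulr1 ?mulr0 ?mul0r.
rewrite -mulr_suml (sum_subsets_prod (fun x b =>
  bernoulli pv b * (if x \in e then b%:R else 1))).
rewrite (eq_bigr (fun x => if x \in e then pv else 1)); last first.
  by move=> x _; case: ifP => _; rewrite ?mulr1 ?mulr0 ?addr0 ?bernoulliD.
by rewrite prod_mem_card e2 expr1n mulr1.
Qed.

Lemma bernoulli_ge0 p b : 0 <= p <= 1 -> 0 <= bernoulli p b.
Proof. by case/andP=> p0 p1; case: b; rewrite /bernoulli ?subr_ge0. Qed.

Lemma real_prob_ge0 g :
  0 <= pv <= 1 -> 0 <= pe <= 1 -> 0 <= real_prob pv pe E g.
Proof.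
move=> hv he; case: g => S F; rewrite real_prob_prod.
apply: mulr_ge0; apply: prodr_ge0 => x _; first exact: bernoulli_ge0.
by rewrite /edge_law; case: ifP => _; [exact: bernoulli_ge0 | exact: ler0n].
Qed.

End RealizationProbability.

Section IndependentSamples.
Variables (R : realType) (T : finType) (P : T -> R).
Hypothesis sumP1 : \sum_t P t = 1.

Definition sample_prob (I : finType) (s : {ffun I -> T}) : R :=
  \prod_(i : I) P (s i).

Lemma sum_sample_prob (I : finType) : \sum_(s : {ffun I -> T}) sample_prob s = 1.
Proof.
transitivity (\prod_(i : I) \sum_t P t); first by rewrite bigA_distr_bigA.
by under eq_bigr => i _ do rewrite sumP1; rewrite prodr_const expr1n.
Qed.

Lemma expect_coord (I : finType) (i : I) (h : T -> R) :
  \sum_(s : {ffun I -> T}) sample_prob s * h (s i) = \sum_t P t * h t.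
Proof.
transitivity (\sum_(s : {ffun I -> T})
    \prod_(j : I) (P (s j) * (if j == i then h (s j) else 1))).
  by apply: eq_bigr => s _; rewrite big_split /= prod_pred1.
rewrite -(bigA_distr_bigA (fun j t => P t * (if j == i then h t else 1))) /=.
rewrite (eq_bigr (fun j => if j == i then \sum_t P t * h t else 1)).
  by rewrite prod_pred1.
move=> j _; case: eqP => _ //.
by under eq_bigr => t _ do rewrite mulr1.
Qed.

Lemma expect_coord_pair (I : finType) (i j : I) (h k : T -> R) : i != j ->
  \sum_(s : {ffun I -> T}) sample_prob s * (h (s i) * k (s j)) =
  (\sum_t P t * h t) * (\sum_t P t * k t).
Proof.
move=> ij.
transitivity (\sum_(s : {ffun I -> T}) \prod_(l : I) (P (s l) *
   ((if l == i then h (s l) else 1) * (if l == j then k (s l) else 1)))).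
  by apply: eq_bigr => s _; rewrite big_split /= big_split /= !prod_pred1.
rewrite -(bigA_distr_bigA (fun l t =>
  P t * ((if l == i then h t else 1) * (if l == j then k t else 1)))) /=.
rewrite (eq_bigr (fun l => (if l == i then \sum_t P t * h t else 1) *
                           (if l == j then \sum_t P t * k t else 1))).
  by rewrite big_split /= !prod_pred1.
move=> l _; case: (eqVneq l i) => [->|li].
  by rewrite (negbTE ij) mulr1; under eq_bigr => t _ do rewrite mulr1.
case: eqP => _; rewrite mul1r.
  by under eq_bigr => t _ do rewrite mul1r.
by under eq_bigr => t _ do rewrite !mulr1.
Qed.

End IndependentSamples.

Section EmpiricalFrequency.
Variables (R : realType) (T : finType) (P X : T -> R) (n : nat).
Hypothesis sumP1 : \sum_t P t = 1.
Hypothesis X_indicator : forall t, X t * X t = X t.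
Hypothesis n_gt0 : (0 < n)%N.

Let q := \sum_t P t * X t.

Definition freq (s : {ffun 'I_n -> T}) : R := (\sum_r X (s r)) / n%:R.

Let n_neq0 : n%:R != 0 :> R.
Proof. by rewrite pnatr_eq0 -lt0n. Qed.

Lemma expect_freq : \sum_(s : {ffun 'I_n -> T}) sample_prob P s * freq s = q.
Proof.
under eq_bigr => s _ do rewrite /freq mulrA mulr_sumr.
rewrite -mulr_suml exchange_big /=.
under eq_bigr => r _ do rewrite (expect_coord sumP1).
by rewrite sumr_const card_ord -[_ *+ n]mulr_natr mulfK.
Qed.

Lemma expect_centered : \sum_t P t * (X t - q) = 0.
Proof.
under eq_bigr => t _ do rewrite mulrBr.
by rewrite sumrB -mulr_suml sumP1 mul1r subrr.
Qed.

Lemma variance_indicator : \sum_t P t * (X t - q) ^+ 2 = q - q ^+ 2.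
Proof.
transitivity (\sum_t (P t * X t * (1 - 2 * q) + P t * q ^+ 2)).
  by apply: eq_bigr => t _; rewrite sqrrB expr2 X_indicator -mulr_natr; ring.
by rewrite big_split /= -!mulr_suml sumP1 mul1r -/q; ring.
Qed.

(* Expand the square of the centred sum; the cross terms vanish by
   independence of distinct coordinates. *)
Lemma variance_freq_le :
  \sum_(s : {ffun 'I_n -> T}) sample_prob P s * (freq s - q) ^+ 2 <= q / n%:R.
Proof.
pose Y t := X t - q.
have freq_centered s : freq s - q = (\sum_r Y (s r)) / n%:R.
  by rewrite /freq sumrB sumr_const card_ord mulrBl -[q *+ n]mulr_natr mulfK.
have square_expand s : sample_prob P s * (freq s - q) ^+ 2 =
    \sum_r \sum_r' sample_prob P s * (Y (s r) * Y (s r')) / n%:R ^+ 2.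
  rewrite freq_centered exprMn expr2 big_distrlr /= mulr_suml mulr_sumr.
  apply: eq_bigr => r _; rewrite mulr_suml mulr_sumr; apply: eq_bigr => r' _.
  by rewrite exprVn !mulrA.
have row_sum r : \sum_(s : {ffun 'I_n -> T}) \sum_r'
    sample_prob P s * (Y (s r) * Y (s r')) / n%:R ^+ 2 = (q - q ^+ 2) / n%:R ^+ 2.
  rewrite exchange_big /= (bigD1 r) //= [X in _ + X]big1 ?addr0.
    rewrite -mulr_suml (expect_coord sumP1 r (fun t => Y t * Y t)).
    by rewrite -variance_indicator; under eq_bigr => t _ do rewrite -expr2.
  move=> r' r'r; rewrite -mulr_suml expect_coord_pair // 1?eq_sym //.
  by rewrite expect_centered !mul0r.
rewrite (eq_bigr _ (fun s _ => square_expand s)) exchange_big /=.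
rewrite (eq_bigr _ (fun r _ => row_sum r)) sumr_const card_ord.
rewrite -[_ *+ n]mulr_natr expr2 invfM !mulrA divfK //.
rewrite ler_wpM2r ?invr_ge0 ?ler0n //.
by rewrite gerDl oppr_le0 sqr_ge0.
Qed.

Lemma min_ge_sub_sqr (f t : R) : 0 < t -> q < t ->
  f - (f - q) ^+ 2 / t <= Num.min f (2 * t).
Proof.
move=> t_gt0 qt.
set d := (f - q) ^+ 2 / t.
have dt : d * t = (f - q) ^+ 2 by rewrite /d divfK // gt_eqF.
have d_ge0 : 0 <= d by rewrite /d divr_ge0 ?sqr_ge0 // ltW.
rewrite le_min; apply/andP; split; first lra.
by case: (lerP f (2 * t)) => hf; nra.
Qed.

Hypothesis P_ge0 : forall t, 0 <= P t.

Lemma expect_min_freq_ge (t : R) : 0 < t -> q < t ->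
  q - q / (n%:R * t) <=
  \sum_(s : {ffun 'I_n -> T}) sample_prob P s * Num.min (freq s) (2 * t).
Proof.
move=> t_gt0 qt.
apply: le_trans (_ : \sum_(s : {ffun 'I_n -> T})
    sample_prob P s * (freq s - (freq s - q) ^+ 2 / t) <= _).
  under eq_bigr => s _ do rewrite mulrBr.
  rewrite sumrB expect_freq lerD2l lerN2.
  under eq_bigr => s _ do rewrite mulrA.
  rewrite -mulr_suml invfM mulrA.
  by apply: ler_wpM2r; [rewrite invr_ge0 ltW | exact: variance_freq_le].
apply: ler_sum => s _; rewrite ler_wpM2l ?min_ge_sub_sqr //.
by apply: prodr_ge0 => r _; exact: P_ge0.
Qed.

End EmpiricalFrequency.

Section RoundsAndThreshold.
Variables (R : realType) (eps pv pe : R).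
Hypotheses (eps_gt0 : 0 < eps) (eps_le : eps <= expR (-1))
  (pv_gt0 : 0 < pv) (pv_le1 : pv <= 1) (pe_gt0 : 0 < pe) (pe_le1 : pe <= 1).

Lemma ln_inv_ge1 (x : R) : 0 < x -> x <= expR (-1) -> 1 <= ln (1 / x).
Proof.
move=> x_gt0 hx; rewrite -[X in X <= _](expRK 1) ler_ln ?posrE ?expR_gt0 ?divr_gt0 //.
by rewrite div1r -[expR 1]invrK lef_pV2 ?posrE ?invr_gt0 ?expR_gt0 // -expRN.
Qed.

Lemma edge_prob_gt0 : 0 < pv ^+ 2 * pe.
Proof. by rewrite mulr_gt0 // exprn_gt0. Qed.

Lemma edge_prob_le1 : pv ^+ 2 * pe <= 1.
Proof.
by apply: mulr_ile1; [exact: exprn_ge0 (ltW pv_gt0) | exact: ltW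
  | exact: exprn_ile1 (ltW pv_gt0) pv_le1 | ].
Qed.

Let ln_eps_gt0 : 0 < ln (1 / eps).
Proof. exact: lt_le_trans ltr01 (ln_inv_ge1 eps_gt0 eps_le). Qed.

Let ln_eps_edge_ge1 : 1 <= ln (1 / (eps * pv ^+ 2 * pe)).
Proof.
rewrite -mulrA; apply: ln_inv_ge1; first by rewrite mulr_gt0 ?edge_prob_gt0.
by apply: le_trans eps_le; rewrite ger_pMr ?edge_prob_le1.
Qed.

Lemma tau_gt0 : 0 < tau eps pv pe.
Proof.
by rewrite /tau divr_gt0 ?mulr_gt0 ?exprn_gt0.
Qed.

Lemma eps_Rreal_tau :
  eps * (Rreal eps pv pe * tau eps pv pe) = 100 * ln (1 / (eps * pv ^+ 2 * pe)).
Proof.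
by rewrite /Rreal /tau; field; rewrite !gt_eqF.
Qed.

Lemma Rreal_le_rounds : Rreal eps pv pe <= (rounds eps pv pe)%:R.
Proof.
by rewrite /rounds natr_absz (le_trans (ceil_ge _)) // ler_int ler_norm.
Qed.

Lemma rounds_gt0 : (0 < rounds eps pv pe)%N.
Proof.
rewrite -(ltr0n R) (lt_le_trans _ Rreal_le_rounds) // /Rreal.
by rewrite divr_gt0 ?mulr_gt0 ?exprn_gt0 // (lt_le_trans ltr01 ln_eps_edge_ge1).
Qed.

Lemma eps_rounds_tau_ge1 : 1 <= eps * ((rounds eps pv pe)%:R * tau eps pv pe).
Proof.
apply: le_trans (_ : eps * (Rreal eps pv pe * tau eps pv pe) <= _).
  by rewrite eps_Rreal_tau; have := ln_eps_edge_ge1; lra.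
by rewrite ler_pM2l // ler_pM2r ?tau_gt0 ?Rreal_le_rounds.
Qed.

End RoundsAndThreshold.

Lemma min_div_pos (R : realFieldType) (a b c : R) : 0 < c ->
  Num.min (a / c) (b / c) * c = Num.min a b.
Proof.
move=> c_gt0; have [ab|ba] := lerP a b.
  by rewrite !min_l ?divfK ?gt_eqF // ler_wpM2r // invr_ge0 ltW.
by rewrite !min_r ?divfK ?gt_eqF // ?ltW // ltr_pM2r ?invr_gt0.
Qed.

Section EdgeDecomposition.
Variables (R : realType) (V : finType) (E : {set {set V}}) (w : {set V} -> R).
Variables (M : realization V -> {set {set V}}) (eps pv pe : R).
Hypotheses (eps_gt0 : 0 < eps) (eps_le : eps <= expR (-1))
  (pv_gt0 : 0 < pv) (pe_gt0 : 0 < pe).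
Hypothesis E_card2 : forall e, e \in E -> #|e| = 2%N.

Let n := rounds eps pv pe.
Let t := tau eps pv pe.
Let c := pv ^+ 2 * pe.
Let N := Nset eps pv pe E M.
Let P := real_prob pv pe E.

Lemma f_edge_freq (s : {ffun 'I_n -> realization V}) (e : {set V}) :
  f_edge R M s e = freq (fun g => (e \in M g)%:R) s.
Proof.
rewrite /f_edge /freq -sum1_card natr_sum big_mkcond /=.
by congr (_ / _); apply: eq_bigr => r _; rewrite inE; case: (e \in M (s r)).
Qed.

Lemma f_edge_notin_EQ (s : {ffun 'I_n -> realization V}) (e : {set V}) :
  e \notin EQ M s -> f_edge R M s e = 0.
Proof.
move=> eQ; rewrite /f_edge.
suff -> : [set r : 'I_n | e \in M (s r)] = set0 by rewrite cards0 mul0r.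
by apply/setP => r; rewrite !inE; apply: contraNF eQ => er; apply/bigcupP; exists r.
Qed.

Let capped (s : {ffun 'I_n -> realization V}) (e : {set V}) : R :=
  Num.min (f_edge R M s e / c) (2 * t / c).

(* Off E_Q the frequency f_e is 0, so the cap is 0 as well: the condition
   [e \in E_Q] in step 1 can be dropped. *)
Lemma xtilde_sum (s : {ffun 'I_n -> realization V}) (g : realization V) :
  \sum_(e in (EQ M s :&: g.2) :&: N) w e * @xtilde R V eps pv pe E M s g e =
  \sum_(e in N) w e * (e \in g.2)%:R * capped s e.
Proof.
rewrite big_mkcond [RHS]big_mkcond; apply: eq_bigr => e _.
rewrite /xtilde -/n -/t -/c -/N !in_setI.
case: (boolP (e \in N)) => eN; rewrite ?andbF ?andbT //.
case: (boolP (e \in g.2)) => eg; rewrite ?andbF ?andbT ?mulr0 ?mul0r ?mulr1 //.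
case: (boolP (e \in EQ M s)) => eQ //=.
have t_gt0 : 0 < t by exact: tau_gt0.
have c_gt0 : 0 < c by exact: edge_prob_gt0.
have cap_ge0 : 0 <= 2 * t / c.
  by apply: divr_ge0; [apply: mulr_ge0; [| exact: ltW] | exact: ltW].
by rewrite /capped f_edge_notin_EQ // mul0r min_l ?mulr0.
Qed.

Lemma expected_value_edgewise :
  expected_value eps pv pe E w M =
  \sum_(e in N) w e * (\sum_(s : {ffun 'I_n -> realization V})
                          sample_prob P s * capped s e) * c.
Proof.
rewrite /expected_value.
transitivity (\sum_(s : {ffun 'I_n -> realization V}) \sum_(g : realization V)
    \sum_(e in N) (w e * capped s e * sample_prob P s) * (P g * (e \in g.2)%:R)).
  apply: eq_bigr => s _; apply: eq_bigr => g _.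
  by rewrite xtilde_sum mulr_sumr; apply: eq_bigr => e _; rewrite /sample_prob /P; ring.
under eq_bigr => s _ do rewrite exchange_big /=.
rewrite exchange_big /=; apply: eq_bigr => e; rewrite inE => /andP[eE _].
under eq_bigr => s _ do rewrite -mulr_sumr (prob_edge_realized pv pe eE (E_card2 eE)).
by rewrite -!mulr_suml mulr_sumr; congr (_ * _); apply: eq_bigr => s _; ring.
Qed.

End EdgeDecomposition.

Theorem mainTheorem7 (R : realType) (V : finType) (E : {set {set V}})
    (w : {set V} -> R) (M : (({set V} * {set {set V}})%type) -> {set {set V}})
    (eps pv pe : R) :
  0 < eps -> eps <= expR (-1) ->
  0 < pv -> pv <= 1 -> 0 < pe -> pe <= 1 ->
  (forall e, e \in E -> #|e| = 2%N) ->
  (forall e, e \in E -> 0 <= w e) ->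
  max_weight_matching_alg E w M ->
  expected_value eps pv pe E w M >=
    (1 - eps) * phi pv pe E w M (Nset eps pv pe E M).
Proof.
move=> eps_gt0 eps_le pv_gt0 pv_le1 pe_gt0 pe_le1 E_card2 w_ge0 _.
have t_gt0 := tau_gt0 eps_gt0 eps_le pv_gt0 pe_gt0.
have n_gt0 := rounds_gt0 eps_gt0 eps_le pv_gt0 pv_le1 pe_gt0 pe_le1.
have ent_ge1 := eps_rounds_tau_ge1 eps_gt0 eps_le pv_gt0 pv_le1 pe_gt0 pe_le1.
have c_gt0 := edge_prob_gt0 pv_gt0 pe_gt0.
have P_ge0 g : 0 <= real_prob pv pe E g by rewrite real_prob_ge0 // ltW.
rewrite (expected_value_edgewise w M eps_gt0 eps_le pv_gt0 pe_gt0 E_card2).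
rewrite /phi mulr_sumr; apply: ler_sum => e; rewrite inE => /andP[eE q_lt_t].
pose X g : R := (e \in M g)%:R.
have X_indicator g : X g * X g = X g by rewrite /X; case: (e \in M g); rewrite ?mulr1 ?mulr0.
have := expect_min_freq_ge (sum_real_prob E pv pe) X_indicator n_gt0 P_ge0
  t_gt0 q_lt_t.
under [X in _ <= X -> _]eq_bigr => s _ do
  rewrite -f_edge_freq -(min_div_pos _ _ c_gt0) mulrA.
rewrite -mulr_suml -/(q_edge pv pe E M e) => expect_ge.
have q_ge0 : 0 <= q_edge pv pe E M e.
  by apply: sumr_ge0 => g _; rewrite mulr_ge0.
have small_loss : q_edge pv pe E M e / ((rounds eps pv pe)%:R * tau eps pv pe)
    <= eps * q_edge pv pe E M e.
  by rewrite ler_pdivrMr ?(mulr_gt0 _ t_gt0) ?ltr0n // mulrAC ler_peMl.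
have := w_ge0 e eE; rewrite -mulrA; nra.
Qed.
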